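(* Let $(C,0)\subset\mathbb{A}^n$ be a homogeneous reduced curve singularity (the cone over a finite set of points in $\mathbb{P}^{n-1}$, all coordinates of weight $1$), with graded coordinate ring $\mathcal{O}$ and graded total ring of fractions $K$. For every integer $\ell$, if $K_{\ell+1}=\mathcal{O}_{\ell+1}$ then $T^1_\ell=0$. In particular, if $C=L_r^n$ is the cone over $r$ points of $\mathbb{P}^{n-1}$ in general position and $d$ is the integer with $\binom{n+d-2}{d-1}<r\le\binom{n+d-1}{d}$, then $T^1_\ell=0$ for all $\ell\ge d-1$.
   Context: The ground field $\k$ is algebraically closed of characteristic $0$. For a cone $C$ over $r$ points, $K\cong\prod_{i=1}^r\k[t_i,t_i^{-1}]$ graded by $\deg t_i=1$, and $\mathcal{O}=\k[x_1,\dots,x_n]/I\subset K$ with $I$ homogeneous. $T^1=T^1(C,0)=\operatorname{Coker}\big(\Theta_n\otimes\mathcal{O}\to\operatorname{Hom}_{\mathcal{O}_n}(I,\mathcal{O})\big)$, where $\Theta_n\otimes\mathcal{O}$ is the free module on $\partial/\partial x_i$; it is graded, $T^1_\ell$ being the image of homomorphisms sending each homogeneous generator of $I$ of degree $q$ to an element of degree $q+\ell$ (so $\ell<0$ corresponds to deformations of negative weight). A point set in $\mathbb{P}^{n-1}$ of $r$ points is in general position if for every $\ell\ge1$ it imposes $\min(r,\binom{n+\ell-1}{\ell})$ independent conditions on forms of degree $\ell$. *)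

From HB Require Import structures.
From mathcomp Require Import all_boot all_order all_algebra.
From mathcomp Require Import mpoly.

Set Implicit Arguments.
Unset Strict Implicit.
Unset Printing Implicit Defensive.

Import Order.TTheory GRing.Theory Num.Theory.
Local Open Scope ring_scope.

Section Cone.
Variables (k : fieldType) (n r : nat).

(* A polynomial that is homogeneous of integer degree e: for e < 0 this
   means the zero polynomial (the graded piece of negative degree is 0). *)
Definition homog_int (e : int) (f : {mpoly k[n]}) : Prop :=
  match e with
  | Posz m => f \is m.-homog
  | Negz _ => f = 0
  end.

(* The points p_1, ..., p_r of P^{n-1}, given by representative vectors:
   nonzero and pairwise non-proportional (i.e. distinct projective points). *)
Definition distinct_proj_points (p : 'I_r -> 'I_n -> k) : Prop :=
  (forall i, exists t, p i t != 0) /\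
  (forall i j, i != j -> ~ exists c : k, forall t, p i t = c * p j t).

(* The ideal I of the cone C over the points: polynomials vanishing on
   every line c * p_i. *)
Definition inI (p : 'I_r -> 'I_n -> k) (f : {mpoly k[n]}) : Prop :=
  forall (c : k) (i : 'I_r), f.@[fun t => c * p i t] = 0.

(* Graded pieces, via the embedding O -> K = prod_i k[t_i, t_i^-1],
   x_j |-> (p_i j * t_i)_i.  An element of K_e is (c_i t_i^e)_i, identified
   with c : 'I_r -> k; a homogeneous f of degree e maps to (f(p_i) t_i^e)_i. *)
Definition O_piece (p : 'I_r -> 'I_n -> k) (e : int) (c : 'I_r -> k) : Prop :=
  exists f : {mpoly k[n]}, homog_int e f /\ forall i, c i = f.@[p i].

Definition K_piece_eq_O_piece (p : 'I_r -> 'I_n -> k) (e : int) : Prop :=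
  forall c : 'I_r -> k, O_piece p e c.

(* An O_n-module homomorphism I -> O = k[x]/I of degree l, represented by a
   choice of lifts phi : k[x] -> k[x] (only its values on I matter). *)
Definition hom_deg (p : 'I_r -> 'I_n -> k) (l : int)
    (phi : {mpoly k[n]} -> {mpoly k[n]}) : Prop :=
  [/\ (forall f g, inI p f -> inI p g -> inI p (phi (f + g) - (phi f + phi g))),
      (forall h f, inI p f -> inI p (phi (h * f) - h * phi f)) &
      (forall (q : nat) f, inI p f -> f \is q.-homog ->
         exists g, homog_int (q%:Z + l) g /\ inI p (phi f - g))].

(* T^1_l = 0 : every degree-l homomorphism I -> O is induced by a derivation
   sum_j a_j d/dx_j with a_j in O_{l+1}. *)
Definition T1_vanishes (p : 'I_r -> 'I_n -> k) (l : int) : Prop :=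
  forall phi, hom_deg p l phi ->
    exists a : 'I_n -> {mpoly k[n]},
      (forall j, homog_int (l + 1) (a j)) /\
      (forall f, inI p f ->
         inI p (phi f - \sum_(j < n) a j * f^`M(j))).

(* Number of independent conditions imposed by the points on forms of degree
   l = rank of the evaluation matrix (rows: monomials of degree l, padded by
   zero rows for the other monomials of degree < l+1; columns: points). *)
Definition eval_mx (p : 'I_r -> 'I_n -> k) (l : nat) :
    'M[k]_(#|{: 'X_{1..n < l.+1}}|, r) :=
  \matrix_(a, i)
    (let m := (enum_val a : 'X_{1..n < l.+1}) in
     if mdeg m == l then ('X_[m : 'X_{1..n}] : {mpoly k[n]}).@[p i] else 0).

Definition general_position (p : 'I_r -> 'I_n -> k) : Prop :=
  forall l : nat, (1 <= l)%N ->
    \rank (eval_mx p l) = minn r 'C(n + l - 1, l).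

End Cone.

(* A degree-l homomorphism phi : I -> O is determined, at each point p_i of the
   cone, by a vector v_i in k^n: for homogeneous f in I, (phi f)(p_i) equals the
   derivative of f at p_i in the direction v_i.  To see this, pick a form h
   vanishing at the other points but not at p_i; then h * g lies in I whenever
   g is homogeneous and vanishes at p_i, and the Euler identity lets one peel
   off one degree of g at a time, in terms of the values of phi on h times the
   linear forms vanishing at p_i.  If K_(l+1) = O_(l+1), the vectors v_i are
   interpolated by forms a_j of degree l+1, and phi - sum_j a_j d/dx_j then
   vanishes on every line through a p_i, i.e. takes values in I.  For points
   in general position, the evaluation map on forms of degree m >= d is onto
   k^r, which is K_m = O_m. *)

From HB Require Import structures.
From mathcomp Require Import all_boot all_order all_algebra.
From mathcomp Require Import ring zify.
From mathcomp Require Import mpoly.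
Import Order.TTheory GRing.Theory Num.Theory.
Set Implicit Arguments.
Unset Strict Implicit.
Unset Printing Implicit Defensive.
Local Open Scope ring_scope.

Section HomogeneousPolynomials.
Variables (k : fieldType) (n : nat).
Implicit Types (f g : {mpoly k[n]}) (x : 'I_n -> k).

Lemma meval_homogZ f (q : nat) (c : k) x :
  f \is q.-homog -> f.@[fun t => c * x t] = c ^+ q * f.@[x].
Proof.
move=> homf; rewrite !mevalE mulr_sumr; apply: eq_big_seq => m m_supp.
rewrite mulrCA; congr (_ * _).
under eq_bigr => i _ do rewrite exprMn.
by rewrite big_split /= prodrXr -mdegE (dhomog_mf homf m_supp).
Qed.

Lemma dhomog0_mpolyC f : f \is 0.-homog -> f = (f@_0%MM)%:MP.
Proof.
move=> homf; apply/mpolyP => m; rewrite mcoeffC.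
have [->|m_ne0] := eqVneq m 0%MM; first by rewrite mulr1.
by rewrite mulr0 (dhomog_nemf_coeff homf) // mdeg_eq0.
Qed.

Lemma mderiv_dhomog f (q : nat) (j : 'I_n) :
  f \is q.+1.-homog -> f^`M(j) \is q.-homog.
Proof.
move=> homf; apply/dhomogP => m; rewrite mcoeff_msupp mcoeff_deriv => m_supp.
have : (m + U_(j))%MM \in msupp f.
  by rewrite mcoeff_msupp; apply: contraNneq m_supp => ->; rewrite mul0rn.
by move/(dhomog_mf homf) => /=; rewrite mdegD mdeg1 addn1 => -[].
Qed.

Lemma euler_mpolyX (m : 'X_{1..n}) :
  \sum_(j < n) 'X_j * ('X_[m] : {mpoly k[n]})^`M(j) = (mdeg m)%:R *: 'X_[m].
Proof.
rewrite mdegE natr_sum scaler_suml; apply: eq_bigr => j _.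
rewrite mderivX -scalerAr.
have [->|mj_gt0] := posnP (m j); first by rewrite !scale0r.
congr (_ *: _); rewrite -mpolyXD; congr 'X_[_].
apply/mnmP => i; rewrite mnmDE mnmBE mnm1E.
by case: eqP => [<-|_]; [rewrite addnC subnK | rewrite subn0].
Qed.

Lemma euler_mpoly f (q : nat) : f \is q.-homog ->
  \sum_(j < n) 'X_j * f^`M(j) = q%:R *: f.
Proof.
move=> homf; rewrite [in LHS](mpolyE f) [in RHS](mpolyE f).
under eq_bigr => j _ do rewrite raddf_sum mulr_sumr.
rewrite exchange_big /= scaler_sumr; apply: eq_big_seq => m m_supp.
under eq_bigr => j _ do rewrite mderivZ -scalerAr.
by rewrite -scaler_sumr euler_mpolyX (dhomog_mf homf m_supp) scalerA mulrC -scalerA.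
Qed.

Lemma meval_euler f (q : nat) x : f \is q.-homog ->
  \sum_(j < n) x j * (f^`M(j)).@[x] = q%:R * f.@[x].
Proof.
move=> homf; rewrite -mevalZ -(euler_mpoly homf) [RHS]raddf_sum.
by apply: eq_bigr => j _ /=; rewrite mevalM mevalXU.
Qed.

Hypothesis k_pchar0 : [pchar k] =i pred0.

Lemma natr_inj_pchar0 : injective (fun m : nat => m%:R : k).
Proof.
suff le_inj (a b : nat) : (a <= b)%N -> a%:R = b%:R :> k -> a = b.
  move=> a b /= eq_ab; have [le_ab|/ltnW le_ba] := leqP a b; first exact: le_inj.
  exact/esym/le_inj.
move=> le_ab eq_ab; apply/eqP; rewrite eqn_leq le_ab /= -subn_eq0.
by rewrite -((pcharf0P k).1 k_pchar0) natrB // eq_ab subrr.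
Qed.

(* The values c^e (pihomog e f).@[x] of a polynomial in c vanish at the
   infinitely many points c = 0, 1, 2, ...; hence every coefficient is 0. *)
Lemma meval_pihomog_eq0 f x (d : nat) :
  (forall c : k, f.@[fun t => c * x t] = 0) -> (pihomog mdeg d f).@[x] = 0.
Proof.
move=> f_line.
pose N := maxn (msize f) d.+1.
pose P : {poly k} := \poly_(e < N) (pihomog mdeg e f).@[x].
have P_root c : P.[c] = 0.
  rewrite -(f_line c) [in RHS](pihomog_partitionE (leq_maxl (msize f) d.+1)).
  rewrite horner_poly raddf_sum; apply: eq_bigr => e _.
  by rewrite /= (meval_homogZ _ _ (pihomogP _ _ _)) mulrC.
have P0 : P = 0.
  apply: contraTeq isT => P_neq0.
  have := max_poly_roots P_neq0 (rs := [seq m%:R | m <- iota 0 (size P)]).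
  rewrite size_map size_iota ltnn; apply.
  - by apply/allP => c _; apply/rootP.
  - by rewrite map_inj_uniq ?iota_uniq //; apply: natr_inj_pchar0.
by have := coef_poly N (fun e => (pihomog mdeg e f).@[x]) d; rewrite -/P P0 coef0 leq_maxr.
Qed.

End HomogeneousPolynomials.

Section ConeIdeal.
Variables (k : fieldType) (n r : nat) (p : 'I_r -> 'I_n -> k).
Implicit Types (f g h : {mpoly k[n]}).

Lemma inI_meval f i : inI p f -> f.@[p i] = 0.
Proof. by move/(_ 1 i); rewrite (@meval_eq _ _ _ (p i)) // => t; rewrite mul1r. Qed.

Lemma inI0 : inI p 0.
Proof. by move=> c i; rewrite meval0. Qed.

Lemma inID f g : inI p f -> inI p g -> inI p (f + g).
Proof. by move=> If Ig c i; rewrite mevalD If Ig addr0. Qed.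

Lemma inIN f : inI p f -> inI p (- f).
Proof. by move=> If c i; rewrite mevalN If oppr0. Qed.

Lemma inIMl h f : inI p f -> inI p (h * f).
Proof. by move=> If c i; rewrite mevalM If mulr0. Qed.

Lemma inI_sum (I : Type) (s : seq I) (F : I -> {mpoly k[n]}) :
  (forall x, inI p (F x)) -> inI p (\sum_(x <- s) F x).
Proof.
move=> IF; elim: s => [|x s IHs]; first by rewrite big_nil; apply: inI0.
by rewrite big_cons; apply: inID.
Qed.

Lemma inI_meval_eq f g i : inI p (f - g) -> f.@[p i] = g.@[p i].
Proof. by move/(@inI_meval _ i)/eqP; rewrite mevalB subr_eq0 => /eqP. Qed.

Lemma inI_pihomog f (d : nat) : [pchar k] =i pred0 ->
  inI p f -> inI p (pihomog mdeg d f).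
Proof.
move=> k_pchar0 If c i; rewrite (meval_homogZ _ _ (pihomogP _ _ _)).
by rewrite (meval_pihomog_eq0 k_pchar0 d (If^~ i)) mulr0.
Qed.

Variables (l : int) (phi : {mpoly k[n]} -> {mpoly k[n]}).
Hypothesis phi_hom : hom_deg p l phi.

Lemma hom_degD f g : inI p f -> inI p g -> inI p (phi (f + g) - (phi f + phi g)).
Proof. by case: phi_hom => phiD _ _; apply: phiD. Qed.

Lemma hom_degMl h f : inI p f -> inI p (phi (h * f) - h * phi f).
Proof. by case: phi_hom => _ phiM _; apply: phiM. Qed.

Lemma hom_deg0 : inI p (phi 0).
Proof.
have := hom_degD inI0 inI0; rewrite addr0 opprD addrA subrr add0r.
by move/inIN; rewrite opprK.
Qed.

Lemma hom_deg_sum (I : Type) (s : seq I) (F : I -> {mpoly k[n]}) :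
  (forall x, inI p (F x)) ->
  inI p (phi (\sum_(x <- s) F x) - \sum_(x <- s) phi (F x)).
Proof.
move=> IF; elim: s => [|x s IHs]; first by rewrite !big_nil subr0; apply: hom_deg0.
rewrite !big_cons.
have phiD := hom_degD (IF x) (inI_sum s IF).
set S := \sum_(y <- s) F y in phiD IHs *; set T := \sum_(y <- s) phi (F y) in IHs *.
have -> : phi (F x + S) - (phi (F x) + T) =
  (phi (F x + S) - (phi (F x) + phi S)) + (phi S - T) by ring.
exact: inID.
Qed.

Definition hom_at i f := (phi f).@[p i].

Lemma hom_atD i f g : inI p f -> inI p g -> hom_at i (f + g) = hom_at i f + hom_at i g.
Proof. by move=> If Ig; rewrite /hom_at -mevalD; apply/inI_meval_eq/hom_degD. Qed.

Lemma hom_atMl i h f : inI p f -> hom_at i (h * f) = h.@[p i] * hom_at i f.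
Proof. by move=> If; rewrite /hom_at -mevalM; apply/inI_meval_eq/hom_degMl. Qed.

Lemma hom_atZ i (c : k) f : inI p f -> hom_at i (c *: f) = c * hom_at i f.
Proof. by move=> If; rewrite -mul_mpolyC hom_atMl // mevalC. Qed.

Lemma hom_at0 i : hom_at i 0 = 0.
Proof. exact/inI_meval/hom_deg0. Qed.

Lemma hom_at_sum i (I : Type) (s : seq I) (F : I -> {mpoly k[n]}) :
  (forall x, inI p (F x)) -> hom_at i (\sum_(x <- s) F x) = \sum_(x <- s) hom_at i (F x).
Proof. by move=> IF; rewrite /hom_at -raddf_sum; apply/inI_meval_eq/hom_deg_sum. Qed.

End ConeIdeal.

Section LocalForm.
Variables (k : fieldType) (n r : nat) (p : 'I_r -> 'I_n -> k).
Hypothesis k_pchar0 : [pchar k] =i pred0.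
Variables (l : int) (phi : {mpoly k[n]} -> {mpoly k[n]}).
Hypothesis phi_hom : hom_deg p l phi.
Variables (i : 'I_r) (t : 'I_n) (e : nat) (h : {mpoly k[n]}).
Hypothesis pit_neq0 : p i t != 0.
Hypothesis h_homog : h \is e.-homog.
Hypothesis h_eq0 : forall j, j != i -> h.@[p j] = 0.
Hypothesis h_neq0 : h.@[p i] != 0.

Local Notation a := (p i).
Local Notation E := (hom_at p phi i).

Lemma sep_mul_inI (f : {mpoly k[n]}) (q : nat) :
  f \is q.-homog -> f.@[a] = 0 -> inI p (h * f).
Proof.
move=> homf fa0 c j; rewrite mevalM.
have [->|ji] := eqVneq j i; first by rewrite (meval_homogZ _ _ homf) fa0 !mulr0.
by rewrite (meval_homogZ _ _ h_homog) h_eq0 // mulr0 mul0r.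
Qed.

Definition line_form (j : 'I_n) : {mpoly k[n]} := a t *: 'X_j - a j *: 'X_t.

Lemma line_form_homog j : line_form j \is 1.-homog.
Proof. by rewrite rpredB // rpredZ // dhomogX /= mdeg1. Qed.

Lemma meval_line_form j : (line_form j).@[a] = 0.
Proof. by rewrite mevalB !mevalZ !mevalXU mulrC subrr. Qed.

Lemma sep_line_inI j : inI p (h * line_form j).
Proof. exact: sep_mul_inI (line_form_homog j) (meval_line_form j). Qed.

Definition mderiv_at (f : {mpoly k[n]}) := \sum_(j < n) a j *: f^`M(j).

(* Euler's identity, with each x_j rewritten as (line_form j + a_j x_t) / a_t. *)
Lemma euler_line_form (f : {mpoly k[n]}) (q : nat) : f \is q.-homog ->
  (a t * q%:R) *: f = \sum_(j < n) f^`M(j) * line_form j + 'X_t * mderiv_at f.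
Proof.
move=> homf; rewrite -scalerA -(euler_mpoly homf) scaler_sumr /mderiv_at.
rewrite mulr_sumr -big_split /=; apply: eq_bigr => j _.
by rewrite /line_form -!mul_mpolyC; ring.
Qed.

Definition sep_coef (j : 'I_n) := E (h * line_form j) / a t.

Lemma hom_at_sep_mul (q : nat) (f : {mpoly k[n]}) : f \is q.-homog -> f.@[a] = 0 ->
  E (h * f) = \sum_(j < n) (f^`M(j)).@[a] * sep_coef j.
Proof.
elim: q f => [|q IHq] f homf fa0.
  move: fa0; rewrite (dhomog0_mpolyC homf) mevalC => ->.
  by rewrite mulr0 (hom_at0 phi_hom) big1 // => j _; rewrite mderivC meval0 mul0r.
have q1_neq0 : a t * q.+1%:R != 0 by rewrite mulf_neq0 // (pcharf0P k).1.
have hom_Df : mderiv_at f \is q.-homog.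
  by apply: rpred_sum => j _; apply/rpredZ/mderiv_dhomog.
have Dfa0 : (mderiv_at f).@[a] = 0.
  rewrite raddf_sum /=; under eq_bigr do rewrite mevalZ.
  by rewrite (meval_euler _ homf) fa0 mulr0.
have Dfj j : ((mderiv_at f)^`M(j)).@[a] = q%:R * (f^`M(j)).@[a].
  rewrite /mderiv_at (raddf_sum (mderiv j)) raddf_sum /=.
  under eq_bigr do rewrite mderivZ mevalZ mderiv_comm.
  exact/meval_euler/mderiv_dhomog.
have I_Df : inI p (h * mderiv_at f) := sep_mul_inI hom_Df Dfa0.
have I_line j : inI p (f^`M(j) * (h * line_form j)) by apply/inIMl/sep_line_inI.
apply: (mulfI q1_neq0); rewrite -(hom_atZ phi_hom); last exact: sep_mul_inI homf fa0.
rewrite scalerAr euler_line_form // mulrDr mulr_sumr.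
under eq_bigr do rewrite mulrCA.
rewrite (hom_atD phi_hom); first last.
- by rewrite mulrCA; apply: inIMl.
- exact: inI_sum.
rewrite (hom_at_sum phi_hom) // mulrCA (hom_atMl phi_hom) //.
rewrite mevalXU IHq //.
under eq_bigr => j _ do rewrite (hom_atMl phi_hom _ _ (sep_line_inI j)).
under [in X in _ + _ * X]eq_bigr do rewrite Dfj.
rewrite mulr_sumr mulr_sumr -big_split /=; apply: eq_bigr => j _.
by rewrite /sep_coef -addn1 natrD; field.
Qed.

Lemma hom_at_homog_inI (q : nat) (f : {mpoly k[n]}) : inI p f -> f \is q.-homog ->
  E f = \sum_(j < n) (f^`M(j)).@[a] * (sep_coef j / h.@[a]).
Proof.
move=> If homf; apply: (mulfI h_neq0); rewrite -(hom_atMl phi_hom) //.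
rewrite (hom_at_sep_mul homf (inI_meval i If)) mulr_sumr.
by apply: eq_bigr => j _; field.
Qed.

End LocalForm.

Section SeparatingForms.
Variables (k : fieldType) (n r : nat) (p : 'I_r -> 'I_n -> k).
Hypothesis p_distinct : distinct_proj_points p.

Lemma exists_sep_linear_form (i j : 'I_r) : j != i -> exists mu : {mpoly k[n]},
  [/\ mu \is 1.-homog, mu.@[p j] = 0 & mu.@[p i] != 0].
Proof.
move=> ji; case: p_distinct => p_neq0 p_nonprop; have [t pjt] := p_neq0 j.
have [/existsP[s pij_s]|/existsPn pij_prop] :=
  boolP [exists s, p j t * p i s - p j s * p i t != 0].
  exists (p j t *: 'X_s - p j s *: 'X_t); split.
  - by rewrite rpredB // rpredZ // dhomogX /= mdeg1.
  - by rewrite mevalB !mevalZ !mevalXU mulrC subrr.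
  - by rewrite mevalB !mevalZ !mevalXU.
case: (p_nonprop i j); first by rewrite eq_sym.
exists (p i t / p j t) => s; have /negPn := pij_prop s; rewrite subr_eq0 => /eqP pij.
by apply: (mulfI pjt); rewrite pij; field.
Qed.

Lemma exists_sep_form (i : 'I_r) : exists e (h : {mpoly k[n]}), [/\ h \is e.-homog,
    (forall j, j != i -> h.@[p j] = 0) & h.@[p i] != 0].
Proof.
suff [e [h [homh h_eq0 h_neq0]]] : exists e (h : {mpoly k[n]}), [/\ h \is e.-homog,
    (forall j, j \in [seq j <- enum 'I_r | j != i] -> h.@[p j] = 0) & h.@[p i] != 0].
  by exists e, h; split => // j ji; apply: h_eq0; rewrite mem_filter ji mem_enum.
have : i \notin [seq j <- enum 'I_r | j != i] by rewrite mem_filter eqxx.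
elim: [seq _ <- _ | _] => [|j s IHs].
  by exists 0%N, 1; split; rewrite ?dhomog1 // meval1 oner_eq0.
rewrite inE negb_or eq_sym => /andP[ji /IHs[e [h [homh h_eq0 h_neq0]]]].
have [mu [homu mu_j mu_i]] := exists_sep_linear_form ji.
exists (1 + e)%N, (mu * h); split; first exact: dhomogM.
- by move=> j'; rewrite inE mevalM => /orP[/eqP->|/h_eq0->]; rewrite ?mu_j ?mul0r ?mulr0.
- by rewrite mevalM mulf_neq0.
Qed.

Lemma hom_at_mderiv_form (l : int) (phi : {mpoly k[n]} -> {mpoly k[n]}) (i : 'I_r) :
  [pchar k] =i pred0 -> hom_deg p l phi ->
  exists v : 'I_n -> k, forall (q : nat) f, inI p f -> f \is q.-homog ->
    hom_at p phi i f = \sum_(j < n) (f^`M(j)).@[p i] * v j.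
Proof.
move=> k_pchar0 phi_hom; case: p_distinct => p_neq0 _; have [t pit] := p_neq0 i.
have [e [h [homh h_eq0 h_neq0]]] := exists_sep_form i.
exists (fun j => sep_coef p phi i t h j / h.@[p i]) => q f If homf.
exact: (hom_at_homog_inI k_pchar0 phi_hom pit homh h_eq0 h_neq0 If homf).
Qed.

End SeparatingForms.

Section T1Vanishing.
Variables (k : fieldType) (n r : nat) (p : 'I_r -> 'I_n -> k).
Hypothesis k_pchar0 : [pchar k] =i pred0.
Hypothesis r_gt0 : (0 < r)%N.

Let i0 : 'I_r := Ordinal r_gt0.

Lemma O_piece_deg_nonneg (e : int) : K_piece_eq_O_piece p e -> exists m : nat, e = m.
Proof.
case: e => [m|m] K_O; first by exists m.
have [f [/= -> f1]] := K_O (fun _ => 1).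
by move: (f1 i0); rewrite meval0 => /eqP; rewrite oner_eq0.
Qed.

Lemma inI_dhomog0 (g : {mpoly k[n]}) : inI p g -> g \is 0.-homog -> g = 0.
Proof.
move=> Ig /dhomog0_mpolyC g_const; have := inI_meval i0 Ig.
by rewrite g_const mevalC => ->; rewrite mpolyC0.
Qed.

Variables (l : int) (phi : {mpoly k[n]} -> {mpoly k[n]}).
Hypothesis phi_hom : hom_deg p l phi.
Variables (m : nat) (A : 'I_n -> {mpoly k[n]}) (v : 'I_r -> 'I_n -> k).
Hypothesis lS_eq : l + 1 = m.
Hypothesis A_homog : forall j, A j \is m.-homog.
Hypothesis A_interpolates : forall i j, (A j).@[p i] = v i j.
Hypothesis hom_at_v : forall i (q : nat) f, inI p f -> f \is q.-homog ->
  hom_at p phi i f = \sum_(j < n) (f^`M(j)).@[p i] * v i j.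

(* On a line through p_i, both phi g and sum_j A_j dg/dx_j are homogeneous of
   degree q + l, so they agree on it as soon as they agree at p_i. *)
Lemma hom_deg_sub_mderiv_homog (q : nat) (g : {mpoly k[n]}) :
  inI p g -> g \is q.-homog -> inI p (phi g - \sum_(j < n) A j * g^`M(j)).
Proof.
case: q => [|q] Ig homg.
  rewrite (inI_dhomog0 Ig homg) big1 ?subr0; first exact: hom_deg0 phi_hom.
  by move=> j _; rewrite mderiv0 mulr0.
case: phi_hom => _ _ /(_ q.+1 g Ig homg)[G [homG phiG]].
have deg_G : q.+1%:Z + l = (q + m)%N by move: lS_eq; lia.
rewrite deg_G /= in homG; move=> c i.
have phiG_line : (phi g).@[fun t => c * p i t] = G.@[fun t => c * p i t].
  by apply/eqP; rewrite -subr_eq0 -mevalB phiG.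
rewrite mevalB [(\sum_(j < n) _).@[_]]raddf_sum /= phiG_line (meval_homogZ _ _ homG).
rewrite -(inI_meval_eq i phiG) -/(hom_at p phi i g) (hom_at_v i Ig homg) mulr_sumr.
apply/eqP; rewrite subr_eq0; apply/eqP/eq_bigr => j _.
rewrite mevalM (meval_homogZ _ _ (A_homog j)) (meval_homogZ _ _ (mderiv_dhomog j homg)).
by rewrite A_interpolates exprD; ring.
Qed.

Lemma hom_deg_sub_mderiv (f : {mpoly k[n]}) :
  inI p f -> inI p (phi f - \sum_(j < n) A j * f^`M(j)).
Proof.
move=> If; pose F d := pihomog mdeg d f.
have IF d : inI p (F d) by apply: inI_pihomog.
rewrite (pihomog_partitionE (leqnn (msize f))) -/F.
have -> : phi (\sum_(d < msize f) F d) - \sum_(j < n) A j * (\sum_(d < msize f) F d)^`M(j) =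
    (phi (\sum_(d < msize f) F d) - \sum_(d < msize f) phi (F d)) +
    \sum_(d < msize f) (phi (F d) - \sum_(j < n) A j * (F d)^`M(j)).
  rewrite sumrB addrA subrK; congr (_ - _).
  under eq_bigr => j _ do rewrite raddf_sum mulr_sumr.
  by rewrite exchange_big.
apply: inID; first exact: (hom_deg_sum phi_hom _ (fun d : 'I_(msize f) => IF d)).
by apply: inI_sum => d; apply: (hom_deg_sub_mderiv_homog (IF d) (pihomogP _ _ _)).
Qed.

End T1Vanishing.

Lemma T1_vanishes_of_K_piece (k : fieldType) (n r : nat) (p : 'I_r -> 'I_n -> k)
    (l : int) :
  [pchar k] =i pred0 -> (0 < r)%N -> distinct_proj_points p ->
  K_piece_eq_O_piece p (l + 1) -> T1_vanishes p l.
Proof.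
move=> k_pchar0 r_gt0 p_distinct K_O phi phi_hom.
have [m lS_eq] := O_piece_deg_nonneg r_gt0 K_O.
have /fin_all_exists[v hom_at_v] i := hom_at_mderiv_form p_distinct i k_pchar0 phi_hom.
have /fin_all_exists[A A_spec] j := K_O (v^~ j).
exists A; split=> [j|f]; first exact: (A_spec j).1.
apply: (hom_deg_sub_mderiv k_pchar0 r_gt0 phi_hom lS_eq _ _ hom_at_v) => [j|i j].
- by have [] := A_spec j; rewrite lS_eq.
- by have [_ ->] := A_spec j.
Qed.

Lemma leq_bin_monomials (n d m : nat) : (0 < n)%N -> (d <= m)%N ->
  ('C(n + d - 1, d) <= 'C(n + m - 1, m))%N.
Proof.
case: n => [//|n] _ le_dm; rewrite !addSn !subn1 /=.
rewrite -[X in 'C(_, X)](addKn n d) -[X in (_ <= 'C(_, X))%N](addKn n m).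
by rewrite !bin_sub ?leq_addr // leq_bin2l // leq_add2l.
Qed.

Lemma K_piece_eq_O_piece_general_position (k : fieldType) (n r : nat)
    (p : 'I_r -> 'I_n -> k) (d m : nat) :
  (0 < r)%N -> distinct_proj_points p -> general_position p ->
  (r <= 'C(n + d - 1, d))%N -> (d <= m)%N -> K_piece_eq_O_piece p m.
Proof.
move=> r_gt0 [p_neq0 _] p_gen r_le d_le_m c.
have n_gt0 : (0 < n)%N.
  by have [t _] := p_neq0 (Ordinal r_gt0); exact: leq_ltn_trans (ltn_ord t).
case: m d_le_m => [|m] d_le_m.
  move: r_le; rewrite leqn0 in d_le_m; rewrite (eqP d_le_m) bin0 => r_le1.
  exists (c (Ordinal r_gt0))%:MP; split; first by rewrite /= -alg_mpolyC rpredZ // dhomog1.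
  by move=> i; rewrite mevalC; congr (c _); apply: val_inj => /=; have := ltn_ord i; lia.
have full_eval : row_full (eval_mx p m.+1).
  rewrite /row_full p_gen //; apply/eqP/minn_idPl.
  exact: leq_trans r_le (leq_bin_monomials n_gt0 d_le_m).
have /submxP[u row_c] := submx_full (\row_i c i) full_eval.
exists (\sum_a u 0 a *: (let mm := (enum_val a : 'X_{1..n < m.+2}) in
      if mdeg mm == m.+1 then ('X_[mm : 'X_{1..n}] : {mpoly k[n]}) else 0)).
split.
  apply: rpred_sum => a _; apply: rpredZ => /=.
  by case: ifP => deg_a; [rewrite dhomogX | exact: rpred0].
move=> i; have := congr1 (fun M : 'rV_r => M 0 i) row_c; rewrite !mxE => ->.
rewrite raddf_sum; apply: eq_bigr => a _ /=; rewrite mevalZ mxE /=; congr (_ * _).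
by case: ifP => _ //; rewrite meval0.
Qed.

(* The lower bound on r only singles out d; the vanishing needs just the upper one. *)
Theorem mainTheorem2 (k : closedFieldType) (n r : nat)
    (p : 'I_r -> 'I_n -> k) :
  [pchar k] =i pred0 ->
  (0 < r)%N ->
  distinct_proj_points p ->
  (forall l : int, K_piece_eq_O_piece p (l + 1) -> T1_vanishes p l) /\
  (general_position p ->
   forall d : nat,
     ((0 < d)%N -> ('C(n + d - 2, d - 1) < r)%N) ->
     (r <= 'C(n + d - 1, d))%N ->
     forall l : int, (d%:Z - 1 <= l) -> T1_vanishes p l).
Proof.
move=> k_pchar0 r_gt0 p_distinct.
have T1_K := T1_vanishes_of_K_piece k_pchar0 r_gt0 p_distinct.
split=> // p_gen d _ r_le l le_l; apply: T1_K.
have [m [-> d_le_m]] : exists m : nat, l + 1 = m /\ (d <= m)%N.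
  by case lS : (l + 1) => [m|m]; exists m; lia.
exact: K_piece_eq_O_piece_general_position r_gt0 p_distinct p_gen r_le d_le_m.
Qed.
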